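(* For each integer $L\ge 2$ there is an irrational number $x=[a_0,a_1,a_2,\ldots]$ with all $a_i\in\{1,2,3,4\}$ and periodic sequence of partial quotients, such that its Jacobi sequence is periodic with repeating block $1,1,\ldots,1,*$ of length $L$ (the value $1$ repeated $L-1$ times followed by $*$).
   Context: For $x\in\mathbb{R}\setminus\mathbb{Q}$ with regular continued fraction expansion $x=[a_0,a_1,a_2,\ldots]$, the convergents $s_k/t_k$ are defined by $s_{-1}=1$, $s_0=a_0$, $s_k=a_ks_{k-1}+s_{k-2}$ and $t_{-1}=0$, $t_0=1$, $t_k=a_kt_{k-1}+t_{k-2}$ for $k\ge1$. For an odd natural number $n$ and an integer $m$ coprime to $n$, $\left(\frac{m}{n}\right)$ is the usual Jacobi symbol (equal to $1$ if $n=1$); if $n$ is even and $\gcd(m,n)=1$, one sets $\left(\frac{m}{n}\right)=*$, a fixed symbol different from $\pm1$. The Jacobi sequence of $x$ is $\left(\frac{s_k}{t_k}\right)$, $k\ge 0$. *)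

From mathcomp Require Import all_boot all_algebra.
Set Implicit Arguments. Unset Strict Implicit. Unset Printing Implicit Defensive.
Import GRing.Theory Num.Theory.
Local Open Scope ring_scope.

(* Convergents of the regular continued fraction [a_0, a_1, ...] with all
   a_i natural numbers.  cf_conv a k = (s_k, s_(k-1), t_k, t_(k-1)) with
   s_(-1) = 1, s_0 = a_0, t_(-1) = 0, t_0 = 1,
   s_k = a_k s_(k-1) + s_(k-2), t_k = a_k t_(k-1) + t_(k-2). *)
Fixpoint cf_conv (a : nat -> nat) (k : nat) : nat * nat * nat * nat :=
  match k with
  | 0 => (a 0%N, 1%N, 1%N, 0%N)
  | k'.+1 =>
      let: (s, s', t, t') := cf_conv a k' in
      (a k * s + s', s, a k * t + t', t)%N
  end.

Definition cf_num (a : nat -> nat) (k : nat) : nat := (cf_conv a k).1.1.1.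
Definition cf_den (a : nat -> nat) (k : nat) : nat := (cf_conv a k).1.2.

Definition legendre (m p : nat) : int :=
  if (p %| m)%N then 0
  else if [exists x : 'I_p, (x * x == m %[mod p])%N] then 1 else -1.

Definition jacobi (m n : nat) : int :=
  \prod_(p <- primes n) legendre m p ^+ logn p n.

Inductive jac_val := JInt of int | JStar.

Definition jac_sym (m n : nat) : jac_val :=
  if odd n then JInt (jacobi m n) else JStar.

Definition jacobi_seq (a : nat -> nat) (k : nat) : jac_val :=
  jac_sym (cf_num a k) (cf_den a k).

(* Take the partial quotients of period L: 1, 3, 4, ..., 4, 1 (for L = 2: 1, 4).
   A simultaneous induction on (t_k, t_(k+1)) mod 4 shows that t_k is even exactly
   when k = L - 1 (mod L), and that otherwise t_k = 1 or 3 (mod 4) according as k is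
   even or odd; moreover a_(k+1) = 1 whenever t_k is even.
   For odd t_k the relation s_k t_(k-1) - s_(k-1) t_k = (-1)^(k+1) reduces (s_k/t_k)
   to (t_(k-1)/t_k), which is 1 by induction on k: Jacobi reciprocity flips it to
   (t_k/t_(k-1)) = (t_(k-2)/t_(k-1)), or, right after an even denominator, where
   t_k = t_(k-1) + t_(k-2), to (-1/t_k)(t_(k-2)/t_k); the residues mod 4 make every
   sign cancel. *)

From mathcomp Require Import all_boot all_algebra.
From mathcomp Require Import zify ring finfield.
Set Implicit Arguments. Unset Strict Implicit. Unset Printing Implicit Defensive.
Import GRing.Theory Num.Theory.
Local Open Scope ring_scope.

Definition is_sign (z : int) := (z == 1) || (z == -1).

Lemma is_signM z w : is_sign z -> is_sign w -> is_sign (z * w).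
Proof. by move=> /orP[]/eqP-> /orP[]/eqP->. Qed.

Lemma is_sign_exp n : is_sign ((-1) ^+ n).
Proof. by rewrite -signr_odd; case: odd; rewrite /is_sign eqxx ?orbT. Qed.

Lemma legendre1 p : (1 < p)%N -> legendre 1 p = 1.
Proof.
move=> p_gt1; rewrite /legendre dvdn1 gtn_eqF //; case: existsP => // -[].
by exists (Ordinal p_gt1); rewrite muln1.
Qed.

Section Legendre.

Variable p : nat.
Hypotheses (p_pr : prime p) (p_odd : odd p).
Local Notation h := p./2.

Lemma natFp_eq0 n : ((n%:R : 'F_p) == 0) = (p %| n)%N.
Proof. by rewrite -val_eqE /= val_Fp_nat. Qed.

Lemma natFp_eq m n : ((m%:R : 'F_p) == n%:R) = (m == n %[mod p])%N.
Proof. by rewrite -val_eqE /= !val_Fp_nat. Qed.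

Lemma Fp_fermat (x : 'F_p) : x != 0 -> x ^+ (h * 2) = 1.
Proof.
move=> x0; apply: (mulfI x0); rewrite mulr1 -exprS.
have -> : (h * 2).+1 = p by lia.
by rewrite -{2}(expf_card x) card_Fp.
Qed.

Lemma natFp_sqr_inj i j : (0 < i <= h)%N -> (0 < j <= h)%N ->
  (i%:R : 'F_p) ^+ 2 = j%:R ^+ 2 -> i = j.
Proof.
move=> /andP[i0 ih] /andP[j0 jh] /eqP; rewrite eqf_sqr.
case/orP; first by rewrite natFp_eq !modn_small => [/eqP||]; lia.
rewrite -subr_eq0 opprK -natrD natFp_eq0 => /dvdn_leq; lia.
Qed.

Lemma legendre_euler m : ~~ (p %| m)%N ->
  ((legendre m p)%:~R : 'F_p) = m%:R ^+ h.
Proof.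
move=> pNm; have m0 : (m%:R : 'F_p) != 0 by rewrite natFp_eq0.
rewrite /legendre (negbTE pNm); case: existsP => [[x /eqP mx] | nonres].
  have mE : (m%:R : 'F_p) = x%:R ^+ 2 by apply/eqP; rewrite -natrX natFp_eq mx.
  have x0 : (x%:R : 'F_p) != 0 by apply: contraNneq m0 => x0; rewrite mE x0 expr0n.
  by rewrite mE -exprM mulnC Fp_fermat.
have /eqP : (m%:R ^+ h) ^+ 2 = 1 :> 'F_p by rewrite -exprM Fp_fermat.
rewrite sqrf_eq1 => /orP[/eqP mh|/eqP ->] //; exfalso.
pose sqrs := [seq (i%:R : 'F_p) ^+ 2 | i <- index_iota 1 h.+1].
have h0 : (0 < h)%N by have := prime_gt1 p_pr; lia.
(* m, 1^2, ..., h^2 would be h + 1 distinct roots of X^h - 1. *)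
have := @max_poly_roots _ ('X^h - 1) (m%:R :: sqrs).
rewrite -size_poly_eq0 size_XnsubC //= /sqrs size_map size_iota subn1 ltnn.
move=> /(_ isT) too_many; suff : false by []; apply: too_many.
- rewrite /root !hornerE mh subrr eqxx /= all_map.
  apply/allP => i; rewrite mem_index_iota /= !hornerE => i_h.
  by rewrite -exprM mulnC Fp_fermat ?subrr // natFp_eq0; apply/negP => /dvdn_leq; lia.
- apply/andP; split.
    apply/mapP => -[i]; rewrite mem_index_iota => i_h mE; apply: nonres.
    have ip : (i < p)%N by lia.
    by exists (Ordinal ip); rewrite -natFp_eq natrM -expr2 mE.
  rewrite map_inj_in_uniq ?iota_uniq // => i j.
  by rewrite !mem_index_iota; apply: natFp_sqr_inj.
Qed.

Lemma Fp_sign_inj z w : is_sign z -> is_sign w -> (z%:~R : 'F_p) = w%:~R -> z = w.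
Proof.
have Fp1N1 : (1 : 'F_p) != -1.
  rewrite -addr_eq0 -mulr2n natFp_eq0 dvdn_prime2 //.
  by apply: contraTneq p_odd => ->.
move=> /orP[]/eqP-> /orP[]/eqP-> //= /eqP; rewrite ?intrN mulr1z ?(negbTE Fp1N1) //.
by rewrite eq_sym (negbTE Fp1N1).
Qed.

Lemma legendre_sign m : ~~ (p %| m)%N -> is_sign (legendre m p).
Proof.
by move=> pNm; rewrite /legendre (negbTE pNm); case: ifP; rewrite /is_sign eqxx ?orbT.
Qed.

Lemma legendre_mod m : legendre (m %% p) p = legendre m p.
Proof. by rewrite /legendre /dvdn !modn_mod. Qed.

Lemma legendreM m n : legendre (m * n) p = legendre m p * legendre n p.
Proof.
have [pm|pNm] := boolP (p %| m)%N; first by rewrite /legendre pm dvdn_mulr ?mul0r.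
have [pn|pNn] := boolP (p %| n)%N; first by rewrite /legendre pn dvdn_mull ?mulr0.
have pNmn : ~~ (p %| m * n)%N by rewrite Euclid_dvdM // negb_or pNm pNn.
apply: Fp_sign_inj; rewrite ?is_signM ?legendre_sign //.
by rewrite intrM !legendre_euler // natrM exprMn.
Qed.

Lemma legendreN1 : legendre p.-1 p = (-1) ^+ h.
Proof.
have pNp1 : ~~ (p %| p.-1)%N by apply/negP => /dvdn_leq; have := prime_gt1 p_pr; lia.
apply: Fp_sign_inj; rewrite ?legendre_sign ?is_sign_exp //.
rewrite legendre_euler // rmorphXn rmorphN1; congr (_ ^+ _).
by apply/eqP; rewrite -subr_eq0 opprK natr1 prednK ?prime_gt0 ?pchar_Fp_0.
Qed.

Definition abs_res a k := let r := (k * a %% p)%N in if (r <= h)%N then r else (p - r)%N.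

Lemma natFp_abs_res a k :
  ((k * a)%:R : 'F_p) = (-1) ^+ (h < k * a %% p)%N * (abs_res a k)%:R.
Proof.
rewrite /abs_res -(Fp_nat_mod p_pr (k * a)).
set r := (k * a %% p)%N; have r_p : (r <= p)%N by rewrite ltnW ?ltn_pmod ?prime_gt0.
case: leqP => _; first by rewrite mul1r.
by rewrite mulN1r natrB // pchar_Fp_0 // sub0r opprK.
Qed.

Lemma abs_res_perm a : ~~ (p %| a)%N ->
  perm_eq [seq abs_res a k | k <- index_iota 1 h.+1] (index_iota 1 h.+1).
Proof.
move=> pNa; have p0 := prime_gt0 p_pr.
have res_gt0 k : (0 < k <= h)%N -> (0 < k * a %% p)%N.
  case/andP=> k0 kh; rewrite lt0n; apply: contraNneq pNa => /eqP.
  by rewrite -/(dvdn p _) Euclid_dvdM // => /orP[/(dvdn_leq k0)|//]; lia.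
have abs_res_range k : (0 < k <= h)%N -> (0 < abs_res a k <= h)%N.
  move=> /res_gt0; rewrite /abs_res; have := ltn_pmod (k * a) p0.
  by case: (leqP (k * a %% p) h); lia.
have a0 : (a%:R : 'F_p) != 0 by rewrite natFp_eq0.
have abs_res_sqr k : ((abs_res a k)%:R : 'F_p) ^+ 2 = (k%:R * a%:R) ^+ 2.
  by rewrite -natrM natFp_abs_res exprMn sqrr_sign mul1r.
have abs_res_inj : {in index_iota 1 h.+1 &, injective (abs_res a)}.
  move=> k l; rewrite !mem_index_iota => k_h l_h eq_kl; apply: natFp_sqr_inj => //.
  by apply: (mulIf (expf_neq0 2 a0)); rewrite -!exprMn -!abs_res_sqr eq_kl.
have res_uniq : uniq [seq abs_res a k | k <- index_iota 1 h.+1].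
  by rewrite map_inj_in_uniq ?iota_uniq.
have res_sub : {subset [seq abs_res a k | k <- index_iota 1 h.+1] <= index_iota 1 h.+1}.
  by move=> y /mapP[k]; rewrite !mem_index_iota => /abs_res_range ? ->.
have [_ res_eq] := uniq_min_size res_uniq res_sub (eq_leq (esym (size_map _ _))).
by rewrite uniq_perm ?iota_uniq.
Qed.

Lemma gauss_lemma a : ~~ (p %| a)%N ->
  (a%:R : 'F_p) ^+ h = (-1) ^+ (\sum_(1 <= k < h.+1) (h < k * a %% p))%N.
Proof.
move=> pNa; have prod_neq0 : \prod_(1 <= k < h.+1) (k%:R : 'F_p) != 0.
  rewrite prodf_seq_neq0; apply/allP => k; rewrite mem_index_iota natFp_eq0 => k_h.
  by apply/negP => /dvdn_leq; lia.
apply: (mulIf prod_neq0); transitivity (\prod_(1 <= k < h.+1) ((k * a)%:R : 'F_p)).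
  have -> : (a%:R : 'F_p) ^+ h = \prod_(1 <= k < h.+1) a%:R by rewrite prodr_const_nat subn1.
  rewrite -big_split /=.
  by apply: eq_bigr => k _; rewrite natrM mulrC.
rewrite (eq_bigr _ (fun k _ => natFp_abs_res a k)) big_split /= prodrXr; congr (_ * _).
by rewrite -(big_map (abs_res a) xpredT (fun k => (k%:R : 'F_p))) (perm_big _ (abs_res_perm pNa)).
Qed.

(* Reduce  sum_k k a = p sum_k (k a %/ p) + sum_k (k a %% p)  mod 2: each residue has the
   parity of its absolute value plus one if it exceeds h, and the absolute values permute
   1..h. *)
Lemma eisenstein_parity a : odd a -> ~~ (p %| a)%N ->
  odd (\sum_(1 <= k < h.+1) (h < k * a %% p))%N =
  odd (\sum_(1 <= k < h.+1) k * a %/ p)%N.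
Proof.
move=> a_odd pNa; set N := (\sum_(_ <= k < _) _)%N; set Q := (\sum_(_ <= k < _) _)%N.
have sum_abs_res : (\sum_(1 <= k < h.+1) abs_res a k = \sum_(1 <= k < h.+1) k)%N.
  by rewrite -(big_map (abs_res a) xpredT id) (perm_big _ (abs_res_perm pNa)).
have res_parity k : odd (k * a %% p) = odd (abs_res a k + (h < k * a %% p))%N.
  rewrite /abs_res; have := ltn_pmod (k * a) (prime_gt0 p_pr).
  case: (leqP (k * a %% p) h) => _ r_p; rewrite ?addn0 // oddD (oddB (ltnW r_p)).
  by rewrite p_odd; case: odd.
have oddE := big_morph odd oddD (erefl : odd 0 = false).
have sum_div : (\sum_(1 <= k < h.+1) k * a = Q * p + \sum_(1 <= k < h.+1) k * a %% p)%N.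
  by rewrite /Q big_distrl -big_split; apply: eq_bigr => k _; apply: divn_eq.
have := congr1 odd sum_div; rewrite -big_distrl /= oddD !oddM a_odd p_odd !andbT.
rewrite !oddE (eq_bigr _ (fun k _ => res_parity k)) -!oddE big_split /= sum_abs_res oddD.
by case: odd; case: odd; case: odd.
Qed.

Lemma legendre_eisenstein a : odd a -> ~~ (p %| a)%N ->
  legendre a p = (-1) ^+ (\sum_(1 <= k < h.+1) k * a %/ p)%N.
Proof.
move=> a_odd pNa; rewrite -signr_odd -eisenstein_parity // signr_odd.
apply: Fp_sign_inj; rewrite ?legendre_sign ?is_sign_exp //.
by rewrite legendre_euler // gauss_lemma // rmorphXn rmorphN1.
Qed.

End Legendre.

Lemma sum_leq_const n m : (\sum_(1 <= i < n.+1) (i <= m) = minn n m)%N.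
Proof.
elim: n => [|n IH]; first by rewrite big_geq // min0n.
by rewrite big_nat_recr //= IH; case: (ltnP n m) => ? /=; lia.
Qed.

Lemma lattice_neq p q j k : coprime p q -> (0 < k < p)%N -> (j * p != k * q)%N.
Proof.
move=> pq_coprime /andP[k0 kp]; apply: contraTneq kp => jp_kq; rewrite -leqNgt.
by apply: (dvdn_leq k0); rewrite -(Gauss_dvdl _ pq_coprime) -jp_kq dvdn_mull.
Qed.

Section LatticePoints.

Variables p q : nat.
Hypotheses (p_odd : odd p) (q_odd : odd q) (pq_coprime : coprime p q).

Lemma lattice_count_div k : (0 < k < p./2.+1)%N ->
  (k * q %/ p = \sum_(1 <= j < q./2.+1) (j * p < k * q))%N.
Proof.
move=> k_h; have p0 : (0 < p)%N by case: p p_odd.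
rewrite (eq_bigr (fun j => (j <= k * q %/ p)%N : nat)); last first.
  move=> j _; rewrite leq_divRL // ltn_neqAle lattice_neq //.
  by case/andP: k_h => -> /=; rewrite ltnS => /leq_ltn_trans; apply; lia.
rewrite sum_leq_const; apply/esym/minn_idPr; rewrite -ltnS ltn_divLR //.
have := odd_double_half p; have := odd_double_half q; rewrite p_odd q_odd; nia.
Qed.

End LatticePoints.

(* Each lattice point (k, j) of the rectangle [1, p/2] x [1, q/2] lies strictly on one side
   of the line j p = k q. *)
Lemma lattice_sum p q : odd p -> odd q -> coprime p q ->
  (\sum_(1 <= k < p./2.+1) k * q %/ p + \sum_(1 <= j < q./2.+1) j * p %/ q = p./2 * q./2)%N.
Proof.
move=> p_odd q_odd pq_coprime; have qp_coprime : coprime q p by rewrite coprime_sym.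
rewrite (eq_big_nat _ _ (fun k k_h => lattice_count_div p_odd q_odd pq_coprime k_h)).
rewrite (eq_big_nat _ _ (fun j j_h => lattice_count_div q_odd p_odd qp_coprime j_h)).
rewrite [X in (_ + X)%N]exchange_big_nat -big_split /=.
rewrite (eq_big_nat _ _ (F2 := fun=> q./2)) ?sum_nat_const_nat ?subn1 // => k k_h.
rewrite -big_split /= (eq_bigr (fun=> 1%N)) ?sum_nat_const_nat ?subn1 ?muln1 // => j _.
have k_p : (0 < k < p)%N by case/andP: k_h => -> /=; lia.
by have := lattice_neq j pq_coprime k_p; case: ltngtP.
Qed.

Lemma legendre_reciprocity p q : prime p -> prime q -> p != q -> odd p -> odd q ->
  legendre q p * legendre p q = (-1) ^+ (p./2 * q./2).
Proof.
move=> p_pr q_pr pq p_odd q_odd.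
have pNq : ~~ (p %| q)%N by rewrite dvdn_prime2.
have qNp : ~~ (q %| p)%N by rewrite dvdn_prime2 // eq_sym.
by rewrite !legendre_eisenstein // -exprD lattice_sum // prime_coprime.
Qed.

Lemma jacobi_prod_range m n N : (0 < n < N)%N ->
  jacobi m n = \prod_(0 <= p < N) legendre m p ^+ logn p n.
Proof.
case/andP=> n0 nN; rewrite /jacobi -(filter_pi_of nN) big_filter big_mkcond /=.
apply: eq_bigr => p _; case: ifPn => // pNn.
by move: pNn; rewrite -logn_gt0 lt0n negbK => /eqP ->.
Qed.

Lemma jacobin1 m : jacobi m 1 = 1.
Proof. by rewrite /jacobi big_nil. Qed.

Lemma jacobi1n n : jacobi 1 n = 1.
Proof.
rewrite /jacobi big_seq big1 // => p; rewrite mem_primes => /and3P[p_pr _ _].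
by rewrite legendre1 ?prime_gt1 // expr1n.
Qed.

Lemma jacobi_prime m p : prime p -> jacobi m p = legendre m p.
Proof. by move=> p_pr; rewrite /jacobi primes_prime // big_seq1 logn_prime // eqxx. Qed.

Lemma jacobiMr m a b : (0 < a)%N -> (0 < b)%N ->
  jacobi m (a * b) = jacobi m a * jacobi m b.
Proof.
move=> a0 b0; have ab0 : (0 < a * b)%N by rewrite muln_gt0 a0.
have lt_ab c : (0 < c)%N -> (c %| a * b)%N -> (0 < c < (a * b).+1)%N.
  by move=> c0 /(dvdn_leq ab0) c_ab; rewrite c0 ltnS.
rewrite (jacobi_prod_range m (lt_ab _ ab0 (dvdnn _))).
rewrite (jacobi_prod_range m (lt_ab _ a0 (dvdn_mulr b (dvdnn a)))).
rewrite (jacobi_prod_range m (lt_ab _ b0 (dvdn_mull a (dvdnn b)))).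
by rewrite -big_split; apply: eq_bigr => p _; rewrite lognM // exprD.
Qed.

Lemma jacobiMl a b n : odd n -> jacobi (a * b) n = jacobi a n * jacobi b n.
Proof.
move=> n_odd; rewrite /jacobi -big_split big_seq [RHS]big_seq; apply: eq_bigr => p.
rewrite mem_primes => /and3P[p_pr _ pn].
have p_odd : odd p by apply: contraTT n_odd; rewrite -!dvdn2 => /dvdn_trans; apply.
by rewrite legendreM // exprMn.
Qed.

Lemma jacobi_mod a b n : (a = b %[mod n])%N -> jacobi a n = jacobi b n.
Proof.
move=> ab; rewrite /jacobi big_seq [RHS]big_seq; apply: eq_bigr => p.
rewrite mem_primes => /and3P[p_pr _ pn].
by rewrite -legendre_mod -(modn_dvdm a pn) ab (modn_dvdm b pn) legendre_mod.
Qed.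

Lemma odd_prime_mul_ind (P : nat -> Prop) : P 1%N ->
  (forall p, prime p -> odd p -> P p) ->
  (forall a b, odd a -> odd b -> P a -> P b -> P (a * b)%N) ->
  forall n, odd n -> P n.
Proof.
move=> P1 Pp PM n; elim/ltn_ind: n => n IH n_odd.
have [n_le1|n_gt1] := leqP n 1; first by have -> : n = 1%N by move: n_odd n_le1; case: (n) => [|[]].
have pd_pr := pdiv_prime n_gt1; have pd_n := pdiv_dvd n.
have n_eq := divnK pd_n; move: (n_odd); rewrite -n_eq oddM => /andP[q_odd pd_odd].
suff : P (n %/ pdiv n * pdiv n)%N by rewrite n_eq.
apply: PM => //; last exact: Pp.
by apply: IH => //; rewrite ltn_Pdiv ?prime_gt1 // ltnW.
Qed.

Lemma odd_halfM a b : odd a -> odd b -> odd (a * b)./2 = odd a./2 (+) odd b./2.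
Proof.
move=> a_odd b_odd; rewrite -[a]odd_double_half -[b]odd_double_half a_odd b_odd.
have -> : ((true + a./2.*2) * (true + b./2.*2))%N =
          (true + (a./2.*2 * b./2 + a./2 + b./2).*2)%N.
  by rewrite !doubleD -!muln2 /=; ring.
by rewrite !half_bit_double oddD oddD oddM odd_double.
Qed.

Lemma jacobiN1 n m : odd n -> (n %| m.+1)%N -> jacobi m n = (-1) ^+ n./2.
Proof.
move=> n_odd; move: n n_odd m; apply: odd_prime_mul_ind.
- by move=> m _; rewrite jacobin1.
- move=> p p_pr p_odd m pm; rewrite jacobi_prime // -legendreN1 //.
  rewrite -legendre_mod -[RHS]legendre_mod; congr legendre; apply/eqP.
  rewrite -(eqn_modDr 1) !addn1 prednK ?prime_gt0 // modnn.
  by move: pm; rewrite /dvdn.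
move=> a b a_odd b_odd IHa IHb m ab_m.
have a_m := dvdn_trans (dvdn_mulr b (dvdnn a)) ab_m.
have b_m := dvdn_trans (dvdn_mull a (dvdnn b)) ab_m.
rewrite jacobiMr ?odd_gt0 // IHa // IHb // -exprD.
by rewrite -[LHS]signr_odd -[RHS]signr_odd odd_halfM // oddD.
Qed.

Definition jacobi_reciprocal m n := jacobi m n * jacobi n m = (-1) ^+ (m./2 * n./2).

Lemma jacobi_reciprocal_sym m n : jacobi_reciprocal m n -> jacobi_reciprocal n m.
Proof. by rewrite /jacobi_reciprocal mulrC mulnC. Qed.

Lemma jacobi_reciprocalMr m a b : odd m -> odd a -> odd b ->
  jacobi_reciprocal m a -> jacobi_reciprocal m b -> jacobi_reciprocal m (a * b).
Proof.
move=> m_odd a_odd b_odd rec_a rec_b; rewrite /jacobi_reciprocal.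
rewrite jacobiMr ?odd_gt0 // jacobiMl // mulrACA rec_a rec_b -exprD.
by rewrite -[LHS]signr_odd -[RHS]signr_odd oddD !oddM odd_halfM // andb_addr.
Qed.

Lemma jacobi_reciprocity m n : odd m -> odd n -> coprime m n ->
  jacobi m n * jacobi n m = (-1) ^+ (m./2 * n./2).
Proof.
move=> m_odd; move: m m_odd n; apply: odd_prime_mul_ind.
- by move=> n _ _; rewrite jacobin1 jacobi1n mulr1.
- move=> p p_pr p_odd n n_odd; move: n n_odd; apply: odd_prime_mul_ind.
  + by move=> _; rewrite jacobin1 jacobi1n muln0 mulr1.
  + move=> q q_pr q_odd pq_coprime; rewrite !jacobi_prime // mulrC legendre_reciprocity //.
    by apply: contraTneq pq_coprime => ->; rewrite /coprime gcdnn gtn_eqF ?prime_gt1.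
  move=> a b a_odd b_odd IHa IHb; rewrite coprimeMr => /andP[ca cb].
  exact: jacobi_reciprocalMr (IHa ca) (IHb cb).
move=> a b a_odd b_odd IHa IHb n n_odd; rewrite coprimeMl => /andP[ca cb].
apply/jacobi_reciprocal_sym/jacobi_reciprocalMr => //.
  exact/jacobi_reciprocal_sym/IHa.
exact/jacobi_reciprocal_sym/IHb.
Qed.

Lemma jacobi_subr n x : odd n -> (x <= n)%N ->
  jacobi (n - x) n = (-1) ^+ n./2 * jacobi x n.
Proof.
move=> n_odd x_n; have n0 := odd_gt0 n_odd.
rewrite -(@jacobiN1 n n.-1) ?prednK // -jacobiMl //; apply: jacobi_mod; apply/eqP.
by rewrite -(eqn_modDr x) subnK // -mulSnr prednK // modnn modnMr.
Qed.

Lemma coprime_of_add1 x y u v : (u * x = v * y + 1)%N -> coprime x y.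
Proof.
move=> uv_eq; have : (gcdn x y %| u * x)%N by rewrite dvdn_mull // dvdn_gcdl.
by rewrite uv_eq dvdn_addr ?dvdn1 // dvdn_mull // dvdn_gcdr.
Qed.

Section ContinuedFraction.

Variable a : nat -> nat.
Local Notation s := (cf_num a).
Local Notation t := (cf_den a).

Definition cf_num_prev k := (cf_conv a k).1.1.2.
Definition cf_den_prev k := (cf_conv a k).2.
Local Notation s' := cf_num_prev.
Local Notation t' := cf_den_prev.

Lemma cf_numS k : s k.+1 = (a k.+1 * s k + s' k)%N.
Proof. by rewrite /cf_num /cf_num_prev /=; case: cf_conv => [[[]]]. Qed.

Lemma cf_num_prevS k : s' k.+1 = s k.
Proof. by rewrite /cf_num /cf_num_prev /=; case: cf_conv => [[[]]]. Qed.

Lemma cf_denS k : t k.+1 = (a k.+1 * t k + t' k)%N.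
Proof. by rewrite /cf_den /cf_den_prev /=; case: cf_conv => [[[]]]. Qed.

Lemma cf_den_prevS k : t' k.+1 = t k.
Proof. by rewrite /cf_den /cf_den_prev /=; case: cf_conv => [[[]]]. Qed.

Lemma cf_den0 : t 0 = 1%N. Proof. by []. Qed.

Lemma cf_den_prev0 : t' 0 = 0%N. Proof. by []. Qed.

Lemma cf_det k : if odd k then (s k * t' k = s' k * t k + 1)%N
                 else (s' k * t k = s k * t' k + 1)%N.
Proof.
elim: k => [|k IH]; first by rewrite /cf_num /cf_den /cf_num_prev /cf_den_prev /= muln0 mul1n.
rewrite /= cf_numS cf_num_prevS cf_denS cf_den_prevS !mulnDr !mulnDl.
by case: odd IH => /= ->; ring.
Qed.

Lemma cf_den_coprime k : coprime (t k) (t' k).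
Proof.
have := cf_det k; case: odd => /coprime_of_add1 //.
by rewrite coprime_sym.
Qed.

Hypothesis cf_den_mod4 : forall k, odd (t k) -> (t k %% 4 = if odd k then 3 else 1)%N.
Hypothesis cf_den_even_next : forall k, ~~ odd (t k) -> a k.+1 = 1%N.

Lemma odd_half_cf_den k : odd (t k) -> odd (t k)./2 = odd k.
Proof. by move=> /cf_den_mod4; rewrite -divn2; case: odd => ?; lia. Qed.

Lemma jacobi_cf_den_prev k : odd (t k) -> jacobi (t' k) (t k) = 1.
Proof.
elim/ltn_ind: k => -[_ _|k IH t_odd]; first by rewrite jacobin1.
rewrite cf_den_prevS.
have [tk_odd|tk_even] := boolP (odd (t k)).
  have cop : coprime (t k) (t k.+1) by rewrite coprime_sym -(cf_den_prevS k) cf_den_coprime.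
  have := jacobi_reciprocity tk_odd t_odd cop.
  rewrite (jacobi_mod (_ : t k.+1 = t' k %[mod t k])); last by rewrite cf_denS modnMDl.
  rewrite IH // mulr1 => ->.
  by rewrite -signr_odd oddM !odd_half_cf_den //=; case: odd.
case: k IH t_odd tk_even => [//|k] IH t_odd tk_even.
have t_eq : t k.+2 = (t k.+1 + t k)%N.
  by rewrite cf_denS cf_den_even_next // mul1n cf_den_prevS.
have cop1 : coprime (t k.+1) (t k) by rewrite -(cf_den_prevS k) cf_den_coprime.
have tk_odd : odd (t k).
  have two_tk1 : (2 %| t k.+1)%N by rewrite dvdn2.
  apply: contraLR cop1; rewrite -dvdn2 => two_tk.
  by apply/negP => /(coprime_dvdl two_tk1)/(coprime_dvdr two_tk).
have cop2 : coprime (t k) (t k.+2) by rewrite /coprime t_eq gcdnDr gcdnC.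
have -> : t k.+1 = (t k.+2 - t k)%N by rewrite t_eq addnK.
rewrite jacobi_subr //; last by rewrite t_eq leq_addl.
have := jacobi_reciprocity tk_odd t_odd cop2.
rewrite (jacobi_mod (_ : t k.+2 = t' k %[mod t k])); last first.
  by rewrite t_eq modnDr cf_denS modnMDl.
rewrite IH // mulr1 => ->.
by rewrite -exprD -signr_odd oddD oddM !odd_half_cf_den //=; case: odd.
Qed.

Lemma jacobi_cf_num k : odd (t k) -> jacobi (s k) (t k) = 1.
Proof.
move=> t_odd; have := jacobiMl (s k) (t' k) t_odd.
rewrite jacobi_cf_den_prev // mulr1 => <-; have := cf_det k; case: ifP => k_odd det.
  by rewrite (@jacobi_mod _ 1) ?jacobi1n // det modnMDl.
rewrite jacobiN1 //; last by rewrite -addn1 -det dvdn_mull.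
by rewrite -signr_odd odd_half_cf_den // k_odd.
Qed.

End ContinuedFraction.

Lemma modnS_wrap L k : (0 < L)%N ->
  (k.+1 %% L = if k %% L == L.-1 then 0 else (k %% L).+1)%N.
Proof.
move=> L0; rewrite -addn1 -modnDml; case: eqP => [->|ne].
  by rewrite addn1 prednK // modnn.
by rewrite addn1 modn_small //; have := ltn_pmod k L0; lia.
Qed.

Definition witness_quotients L i : nat :=
  let j := (i %% L)%N in
  (if j == 0 then 1 else if j == 1 then (if L == 2 then 4 else 3)
   else if j == L.-1 then 1 else 4)%N.

Definition witness_den_mod4 L k : nat :=
  (if k %% L == L.-1 then 0 else if odd k then 3 else 1)%N.

Lemma witness_cf_den_mod4 L k : (2 <= L)%N ->
  (cf_den (witness_quotients L) k %% 4 = witness_den_mod4 L k)%N.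
Proof.
move=> L2; have L0 : (0 < L)%N by lia.
have L_1 : (0 == L.-1)%N = false by apply/eqP; lia.
suff : (cf_den (witness_quotients L) k %% 4 = witness_den_mod4 L k /\
        cf_den (witness_quotients L) k.+1 %% 4 = witness_den_mod4 L k.+1)%N by case.
elim: k => [|k [IH0 IH1]].
  rewrite cf_denS cf_den0 cf_den_prev0 /witness_den_mod4 /witness_quotients /=.
  rewrite mod0n (modn_small L2) muln1 addn0 L_1.
  by case: (L =P 2) => [->//|L_ne2]; rewrite ifN_eq //; apply/eqP; lia.
split=> //; rewrite cf_denS cf_den_prevS -modnDm -modnMmr IH1 IH0.
rewrite /witness_den_mod4 /witness_quotients !(modnS_wrap _ L0).
have := ltn_pmod k L0; move: (k %% L)%N => j j_L /=.
case: (eqVneq j L.-1) => [_|j_ne] /=.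
  by rewrite L_1 /=; case: odd; repeat (case: eqP => ? /=); try lia.
case: (eqVneq j.+1 L.-1) => [j1_eq|j1_ne] /=; rewrite ?L_1 /=;
  by case: odd; repeat (case: eqP => ? /=); try lia.
Qed.

Lemma witness_cf_den_odd L k : (2 <= L)%N ->
  odd (cf_den (witness_quotients L) k) = (k %% L != L.-1)%N.
Proof.
move=> L2; have := witness_cf_den_mod4 k L2; rewrite /witness_den_mod4.
by move: (cf_den _ k) => x; case: eqP => _ /=; case: (odd k); lia.
Qed.

Lemma witness_quotients_after_even L k : (2 <= L)%N ->
  ~~ odd (cf_den (witness_quotients L) k) -> witness_quotients L k.+1 = 1%N.
Proof.
move=> L2; rewrite witness_cf_den_odd // negbK => /eqP k_last.
by rewrite /witness_quotients modnS_wrap ?k_last ?eqxx //; lia.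
Qed.

Theorem theorem8 (L : nat) (hL : (2 <= L)%N) :
  exists a : nat -> nat,
    (forall i, a i \in [:: 1; 2; 3; 4]%N) /\
    (exists2 p : nat, (0 < p)%N & forall i, a (i + p)%N = a i) /\
    (forall k, jacobi_seq a k =
               if (k %% L == L.-1)%N then JStar else JInt 1%R).
Proof.
exists (witness_quotients L); split; [|split].
- by move=> i; rewrite /witness_quotients; repeat case: ifP.
- by exists L => [|i]; rewrite /witness_quotients ?modnDr //; lia.
move=> k; rewrite /jacobi_seq /jac_sym witness_cf_den_odd //.
case: eqP => [//|k_ne]; congr JInt; apply: jacobi_cf_num.
- move=> j; rewrite witness_cf_den_odd // witness_cf_den_mod4 // /witness_den_mod4.
  by move=> /negbTE ->.
- by move=> j; apply: witness_quotients_after_even.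
by rewrite witness_cf_den_odd //; apply/eqP.
Qed.
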